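(* Let $\mathbb{K}$ be a field of characteristic $0$, let $V$ be a $\mathbb{K}$-vector space of dimension $n\ge d$, and let $\mathcal{P}_d$ be a homogeneous polynomial functor of degree $d$. Then the functor $\Omega_{V,d}(\mathcal{P}_d):\mathbf{Vec}\to\mathbf{Vec}$ is a homogeneous polynomial functor of degree $d$.
   Context: $\mathbf{Vec}$ is the category of finite-dimensional $\mathbb{K}$-spaces. A functor $\mathcal{P}:\mathbf{Vec}\to\mathbf{Vec}$ is a polynomial functor if each map $\operatorname{Hom}(X,Y)\to\operatorname{Hom}(\mathcal{P}(X),\mathcal{P}(Y))$ is polynomial, homogeneous of degree $d$ if $\mathcal{P}(\lambda h)=\lambda^d\mathcal{P}(h)$. Definition: $\Omega_{V,d}(\mathcal{P}_d)(W)=\operatorname{Hom}_{\mathrm{GL}(V)}\bigl(\bigwedge^dV,\mathcal{P}_d(W\otimes V)\bigr)$, where $\mathrm{GL}(V)$ acts on $W\otimes V$ by $g\mapsto\mathrm{id}_W\otimes g$ and on $\mathcal{P}_d(W\otimes V)$ through $\mathcal{P}_d$; a linear map $h:W\to W'$ is sent to post-composition with $\mathcal{P}_d(h\otimes\mathrm{id}_V)$. (I.e. $\Omega_{V,d}(\mathcal{P}_d)=\mathcal{H}_{V,d}\circ\mathcal{P}_{V,d}\circ\mathcal{T}_V$ with $\mathcal{T}_V=-\otimes V$ and $\mathcal{H}_{V,d}=\operatorname{Hom}_{\mathrm{GL}(V)}(\bigwedge^dV,-)$.) *)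

From HB Require Import structures.
From mathcomp Require Import all_boot all_order all_algebra.
From mathcomp Require Import mpoly.
From Stdlib Require Import ClassicalEpsilon.
Set Implicit Arguments. Unset Strict Implicit. Unset Printing Implicit Defensive.
Import Order.TTheory GRing.Theory.
Local Open Scope ring_scope.

Section Defs.
Variable K : fieldType.

Definition crd (U : vectType K) (u : U) : 'rV[K]_(\dim (@fullv K U)) :=
  \row_i coord (vbasis fullv) i u.

(* matrix of a linear map (row-vector convention): crd (h u) = crd u *m hmx h *)
Definition hmx (U W : vectType K) (h : 'Hom(U, W))
  : 'M[K]_(\dim (@fullv K U), \dim (@fullv K W)) :=
  \matrix_(i, j) coord (vbasis fullv) j (h (tnth (vbasis fullv) i)).

Definition is_poly_map (U W : vectType K) (f : U -> W) : Prop :=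
  exists p : 'I_(\dim (@fullv K W)) -> {mpoly K[\dim (@fullv K U)]},
    forall u j, coord (vbasis fullv) j (f u) = (p j).@[fun i => coord (vbasis fullv) i u].

Definition is_hpoly_functor (d : nat) (F : vectType K -> vectType K)
  (Fh : forall U W : vectType K, 'Hom(U, W) -> 'Hom(F U, F W)) : Prop :=
  [/\ (forall U : vectType K, Fh U U \1%VF = \1%VF),
      (forall (U W X : vectType K) (g : 'Hom(W, X)) (h : 'Hom(U, W)),
          Fh U X (g \o h)%VF = (Fh W X g \o Fh U W h)%VF),
      (forall U W : vectType K, is_poly_map (Fh U W)) &
      (forall (U W : vectType K) (a : K) (h : 'Hom(U, W)),
          Fh U W (a *: h) = a ^+ d *: Fh U W h)].

(* Tensor product W (x) V, modelled as coefficient matrices with respect to the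
   canonical bases: M represents sum_{i,j} M i j * w_i (x) v_j. *)
Definition tens (W V : vectType K) : vectType K :=
  'M[K]_(\dim (@fullv K W), \dim (@fullv K V)).

Definition tmap (W W' V V' : vectType K) (h : 'Hom(W, W')) (k : 'Hom(V, V'))
  : 'Hom(tens W V, tens W' V') :=
  linfun (fun M : tens W V => ((hmx h)^T *m M *m hmx k : tens W' V')).

(* d-element subsets of 'I_n, indexing the standard basis
   e_A = v_{a_1} /\ ... /\ v_{a_d} (a_1 < ... < a_d) of /\^d K^n *)
Definition dsub (n d : nat) := {A : {set 'I_n} | #|A| == d}.

(* the exterior power /\^d V, coordinates in the basis (e_A)_A *)
Definition Ext (n d : nat) : vectType K := {ffun dsub n d -> K^o}.

Definition mx_nat (n : nat) (G : 'M[K]_n) (p q : nat) : K :=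
  match (insub p : option 'I_n), (insub q : option 'I_n) with
  | Some i, Some j => G i j
  | _, _ => 0
  end.

Definition sidx (n d : nat) (A : dsub n d) (i : nat) : nat :=
  nth 0%N (map val (enum (val A))) i.

Definition minor (n d : nat) (G : 'M[K]_n) (A B : dsub n d) : 'M[K]_d :=
  \matrix_(i, j) mx_nat G (sidx A i) (sidx B j).

(* /\^d g for g with matrix G : g v_i = sum_j G i j v_j, so
   (/\^d g) e_A = sum_B det (minor G A B) e_B *)
Definition extmx (n d : nat) (G : 'M[K]_n) : 'End(Ext n d) :=
  linfun (fun x : Ext n d =>
    ([ffun B => \sum_A (x A : K) * \det (minor G A B)] : Ext n d)).

Definition extmap (V : vectType K) (d : nat) (g : 'End(V))
  : 'End(Ext (\dim (@fullv K V)) d) := extmx d (hmx g).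

Section Omega.
Variables (V : vectType K) (d : nat) (F : vectType K -> vectType K)
  (Fh : forall U W : vectType K, 'Hom(U, W) -> 'Hom(F U, F W)).

Definition ExtV : vectType K := Ext (\dim (@fullv K V)) d.

(* GL(V)-equivariance of phi : /\^d V -> P(W (x) V), GL(V) acting on W (x) V by
   id_W (x) g and on P(W (x) V) through P *)
Definition is_GL_equivariant (W : vectType K) (phi : 'Hom(ExtV, F (tens W V))) : Prop :=
  forall g : 'End(V), lker g == 0%VS ->
    (phi \o extmap d g)%VF = (Fh (tmap \1%VF g) \o phi)%VF.

(* the subspace Hom_{GL(V)}(/\^d V, P(W (x) V)) (chosen classically as the
   subspace whose elements are exactly the equivariant maps) *)
Definition OmegaSp (W : vectType K) : {vspace 'Hom(ExtV, F (tens W V))} :=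
  epsilon (inhabits 0%VS)
    (fun S => forall phi, phi \in S <-> is_GL_equivariant phi).

Definition Omega_obj (W : vectType K) : vectType K := subvs_of (OmegaSp W).

Definition postc (W W' : vectType K) (h : 'Hom(W, W'))
  (phi : 'Hom(ExtV, F (tens W V))) : 'Hom(ExtV, F (tens W' V)) :=
  (Fh (tmap h \1%VF) \o phi)%VF.

Definition Omega_hom (W W' : vectType K) (h : 'Hom(W, W'))
  : 'Hom(Omega_obj W, Omega_obj W') :=
  linfun (fun x : Omega_obj W =>
    (vsproj (OmegaSp W') (postc h (vsval x)) : Omega_obj W')).

End Omega.
End Defs.

(** The theorem is formal: GL(V) acts on [W ⊗ V] through the second factor,
    so for every [h : W -> W'] the map [P(h ⊗ id_V)] commutes with the action
    and post-composition with it preserves equivariant maps.  Functoriality of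
    [Ω] is then inherited from that of [P] and of [- ⊗ V], and [h ↦ Ω(h)] is
    the composite of the linear maps [h ↦ h ⊗ id_V] and
    [ψ ↦ (φ ↦ ψ ∘ φ)] with the homogeneous polynomial map [P], hence a
    homogeneous polynomial map of the same degree. *)

From HB Require Import structures.
From mathcomp Require Import all_boot all_order all_algebra.
From mathcomp Require Import mpoly zify.
From Stdlib Require Import ClassicalEpsilon Classical.
Set Implicit Arguments. Unset Strict Implicit. Unset Printing Implicit Defensive.
Import GRing.Theory.
Local Open Scope ring_scope.

Section PolyMaps.
Variable K : fieldType.

Lemma linear_canonical (aT rT : vectType K) (f : aT -> rT) :
  linear f -> exists g : {linear aT -> rT}, f = g.
Proof.
move=> lin_f.
by exists (HB.pack_for {linear aT -> rT} f (GRing.isLinear.Build _ _ _ _ f lin_f)).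
Qed.

Lemma linfun_linearE (aT rT : vectType K) (f : aT -> rT) :
  linear f -> linfun f =1 f.
Proof. by move=> /linear_canonical [g ->]; apply: lfunE. Qed.

Lemma linear_is_poly_map (U W : vectType K) (f : U -> W) :
  linear f -> is_poly_map f.
Proof.
move=> /linear_canonical [g ->].
exists (fun j => \sum_(i < \dim (@fullv K U))
  coord (vbasis fullv) j (g (vbasis fullv)`_i) *: 'X_i) => u j.
rewrite {1}(coord_vbasis (memvf u)) !linear_sum /=.
by apply: eq_bigr => i _; rewrite !linearZ /= mevalXU mulrC.
Qed.

Lemma is_poly_map_comp (U W X : vectType K) (f : U -> W) (g : W -> X) :
  is_poly_map f -> is_poly_map g -> is_poly_map (g \o f).
Proof.
move=> [p fE] [q gE].
exists (fun j => q j \mPo [tuple p i | i < \dim (@fullv K W)]) => u j /=.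
rewrite comp_mpoly_meval gE; apply: meval_eq => i.
by rewrite tnth_mktuple fE.
Qed.

End PolyMaps.

Section SubspaceOfClosedPred.
Variables (K : fieldType) (vT : vectType K) (P : vT -> Prop).
Hypotheses (P0 : P 0) (P_lin : forall a u v, P u -> P v -> P (a *: u + v)).

Lemma exists_vspace_of_pred :
  exists S : {vspace vT}, forall v, v \in S <-> P v.
Proof.
suff grow k : forall U : {vspace vT}, (forall v, v \in U -> P v) ->
    (\dim (@fullv K vT) - \dim U <= k)%N ->
    exists S : {vspace vT}, forall v, v \in S <-> P v.
  by apply: (grow _ 0%VS) => // v; rewrite memv0 => /eqP ->.
elim: k => [|k IHk] U PU codimU.
  exists U => v; split=> [/PU //|_].
  have /eqP -> : U == fullv :> {vspace vT}.
    by rewrite eqEdim subvf -subn_eq0 -leqn0.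
  exact: memvf.
have [[v [Pv vNU]] | PsubU] :=
  classic (exists v, P v /\ v \notin U); last first.
  exists U => v; split=> [/PU //| Pv].
  by apply: NNPP => vNU; apply: PsubU; exists v; split=> //; apply/negP.
apply: (IHk (U + <[v]>)%VS).
  move=> w /memv_addP [u uU [x /vlineP [c ->] ->]].
  by rewrite addrC; apply: P_lin => //; apply: PU.
have ltU : (\dim U < \dim (U + <[v]>))%N.
  rewrite ltn_neqAle dimvS ?addvSl // andbT; apply: contraNneq vNU => eqU.
  have /eqP -> : U == (U + <[v]>)%VS by rewrite eqEdim addvSl eqU leqnn.
  exact: subvP (addvSr U _) _ (memv_line v).
have leU := dimvS (subvf (U + <[v]>)%VS).
lia.
Qed.

End SubspaceOfClosedPred.

Section TensorMaps.
Variable K : fieldType.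
Implicit Types U W X : vectType K.

Lemma hmx1 U : hmx (\1%VF : 'End(U)) = 1%:M.
Proof.
apply/matrixP => i j; rewrite !mxE id_lfunE (tnth_nth 0) coord_free //.
exact: basis_free (vbasisP fullv).
Qed.

Lemma hmx_comp U W X (g : 'Hom(W, X)) (h : 'Hom(U, W)) :
  hmx (g \o h)%VF = hmx h *m hmx g.
Proof.
apply/matrixP => i j; rewrite !mxE comp_lfunE.
rewrite {1}(coord_vbasis (memvf (h (tnth (vbasis fullv) i)))) !linear_sum.
by apply: eq_bigr => k _; rewrite !mxE !linearZ /= !(tnth_nth 0).
Qed.

Lemma hmx_linear U W : linear (@hmx K U W).
Proof.
by move=> a h h'; apply/matrixP => i j; rewrite !mxE add_lfunE scale_lfunE linearP.
Qed.

Lemma tmapE W W' X X' (h : 'Hom(W, W')) (k : 'Hom(X, X')) M :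
  tmap h k M = (hmx h)^T *m M *m hmx k.
Proof.
rewrite linfun_linearE // => a M1 M2.
by rewrite mulmxDr mulmxDl -scalemxAr -scalemxAl.
Qed.

Lemma tmap1 W X : tmap (\1%VF : 'End(W)) (\1%VF : 'End(X)) = \1%VF.
Proof. by apply/lfunP => M; rewrite tmapE !hmx1 trmx1 mul1mx mulmx1 id_lfunE. Qed.

Lemma tmap_comp W W' W'' X X' X'' (g : 'Hom(W', W'')) (h : 'Hom(W, W'))
    (g' : 'Hom(X', X'')) (h' : 'Hom(X, X')) :
  tmap (g \o h)%VF (g' \o h')%VF = (tmap g g' \o tmap h h')%VF.
Proof. by apply/lfunP => M; rewrite comp_lfunE !tmapE !hmx_comp trmx_mul !mulmxA. Qed.

Lemma tmap_commute W W' X X' (h : 'Hom(W, W')) (g : 'Hom(X, X')) :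
  (tmap h \1 \o tmap \1 g)%VF = (tmap \1 g \o tmap h \1)%VF.
Proof. by rewrite -!tmap_comp !comp_lfun1l !comp_lfun1r. Qed.

Lemma tmap_linear W W' X X' (k : 'Hom(X, X')) :
  linear (fun h : 'Hom(W, W') => tmap h k).
Proof.
move=> a h h'; apply/lfunP => M; rewrite add_lfunE scale_lfunE !tmapE.
by rewrite hmx_linear linearD linearZ /= !mulmxDl !scalemxAl.
Qed.

Lemma tmapZ W W' X X' a (h : 'Hom(W, W')) (k : 'Hom(X, X')) :
  tmap (a *: h) k = a *: tmap h k.
Proof.
have [t tE] := linear_canonical (@tmap_linear W W' X X' k).
by move: (linearZ_LR t a h); rewrite -tE.
Qed.

End TensorMaps.

Section Omega.
Variables (K : fieldType) (V : vectType K) (d : nat) (F : vectType K -> vectType K)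
  (Fh : forall U W : vectType K, 'Hom(U, W) -> 'Hom(F U, F W)).

Lemma OmegaSpE (W : vectType K) phi :
  phi \in OmegaSp V d Fh W <-> is_GL_equivariant Fh phi.
Proof.
apply: (epsilon_spec (inhabits 0%VS)
  (fun S => forall phi, phi \in S <-> is_GL_equivariant Fh phi)).
apply: exists_vspace_of_pred => [g _|a f f' Hf Hf' g Hg].
  by rewrite comp_lfun0l comp_lfun0r.
by rewrite comp_lfunDl -comp_lfunZl comp_lfunDr -comp_lfunZr Hf ?Hf'.
Qed.

Lemma postc_equivariant
    (Fh_comp : forall (U W X : vectType K) (g : 'Hom(W, X)) (h : 'Hom(U, W)),
       Fh (g \o h)%VF = (Fh g \o Fh h)%VF)
    (W W' : vectType K) (h : 'Hom(W, W')) (phi : 'Hom(ExtV V d, F (tens W V))) :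
  is_GL_equivariant Fh phi -> is_GL_equivariant Fh (postc Fh h phi).
Proof.
move=> Hphi g Hg; rewrite /postc -comp_lfunA Hphi // !comp_lfunA.
by rewrite -!Fh_comp tmap_commute.
Qed.

Definition Omega_post (W W' : vectType K) (psi : 'Hom(F (tens W V), F (tens W' V)))
  : 'Hom(Omega_obj V d Fh W, Omega_obj V d Fh W') :=
  linfun (fun x => vsproj (OmegaSp V d Fh W') (psi \o vsval x)%VF).

Lemma Omega_postE (W W' : vectType K) psi x :
  @Omega_post W W' psi x = vsproj (OmegaSp V d Fh W') (psi \o vsval x)%VF.
Proof.
rewrite linfun_linearE // => a y z.
by rewrite linearP /= comp_lfunDr -comp_lfunZr linearP.
Qed.

Lemma Omega_post_linear (W W' : vectType K) : linear (@Omega_post W W').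
Proof.
move=> a psi psi'; apply/lfunP => x.
by rewrite add_lfunE scale_lfunE !Omega_postE comp_lfunDl -comp_lfunZl linearP.
Qed.

Section HPolyFunctor.
Hypothesis HF : is_hpoly_functor d Fh.

Lemma vsval_Omega_hom (W W' : vectType K) (h : 'Hom(W, W')) x :
  vsval (Omega_hom V d Fh h x) = postc Fh h (vsval x).
Proof.
have [_ Fh_comp _ _] := HF.
rewrite [Omega_hom _ _ _ _ _]Omega_postE vsprojK //.
by apply/OmegaSpE/postc_equivariant/OmegaSpE/subvsP.
Qed.

Lemma Omega_hpoly_functor : is_hpoly_functor d (Omega_hom V d Fh).
Proof.
have [Fh_id Fh_comp Fh_poly Fh_homog] := HF.
split=> [W | U W X g h | W W' | W W' a h].
- apply/lfunP => x; apply: (can_inj vsvalK).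
  by rewrite vsval_Omega_hom /postc tmap1 Fh_id comp_lfun1l id_lfunE.
- apply/lfunP => x; apply: (can_inj vsvalK).
  rewrite comp_lfunE !vsval_Omega_hom /postc comp_lfunA -Fh_comp -tmap_comp.
  by rewrite comp_lfun1l.
- apply: is_poly_map_comp (linear_is_poly_map (@Omega_post_linear W W')).
  exact: is_poly_map_comp (linear_is_poly_map (tmap_linear _)) (Fh_poly _ _).
- apply/lfunP => x; apply: (can_inj vsvalK).
  rewrite scale_lfunE linearZ /= !vsval_Omega_hom /postc.
  by rewrite tmapZ Fh_homog comp_lfunZl.
Qed.

End HPolyFunctor.
End Omega.

Theorem mainTheorem9 (K : fieldType) (charK0 : [pchar K] =i pred0)
  (V : vectType K) (d : nat) (hnd : (d <= \dim (@fullv K V))%N)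
  (F : vectType K -> vectType K)
  (Fh : forall U W : vectType K, 'Hom(U, W) -> 'Hom(F U, F W)) :
  is_hpoly_functor d Fh ->
  (forall (W W' : vectType K) (h : 'Hom(W, W'))
          (phi : 'Hom(ExtV V d, F (tens W V))),
      is_GL_equivariant Fh phi -> is_GL_equivariant Fh (postc Fh h phi))
  /\ is_hpoly_functor d (Omega_hom V d Fh).
Proof.
move=> HF; split; last exact: Omega_hpoly_functor.
case: HF => _ Fh_comp _ _ W W' h phi.
exact: postc_equivariant.
Qed.
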